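(* Let $k$ be a field, $G$ a finite group and $H=O_k(G)$ the Hopf algebra of $k$-valued functions on $G$. If the generic base algebra $\mathcal{B}_H$ is isomorphic as a $k$-algebra to a localization $T^{-1}k[x_1,\dots,x_m]$ of a polynomial algebra in finitely many variables (for some multiplicative subset $T$), then the field $k(t_g\mid g\in G)^G$ of $G$-invariant rational functions, where $t_g$ ($g\in G$) are independent indeterminates and $G$ acts by $k$-automorphisms via $h\cdot t_g=t_{hg}$, is a purely transcendental extension of $k$.
   Context: $O_k(G)$ has basis $\{e_g\}_{g\in G}$ ($e_g$ the indicator function of $g$), with pointwise multiplication, $\Delta(e_g)=\sum_{h\in G}e_{gh^{-1}}\otimes e_h$, $\varepsilon(e_g)=\delta_{g,1}$, $S(e_g)=e_{g^{-1}}$. For a Hopf algebra $H$ with Sweedler notation $\Delta(x)=x_1\otimes x_2$: let $\{\tau_x: x\in H\}$ be a copy of the vector space $H$, $S(\tau_H)$ its symmetric algebra, and $x\mapsto \tau^{-1}_x$ the unique linear map from $H$ to $\mathrm{Frac}\,S(\tau_H)$ with $\tau_{x_1}\tau^{-1}_{x_2}=\tau^{-1}_{x_1}\tau_{x_2}=\varepsilon(x)1$. The generic base algebra $\mathcal{B}_H$ is the subalgebra of $\mathrm{Frac}\,S(\tau_H)$ generated by all $\sigma(x,y)=\tau_{x_1}\tau_{y_1}\tau^{-1}_{x_2y_2}$ and $\sigma^{-1}(x,y)=\tau_{x_1y_1}\tau^{-1}_{x_2}\tau^{-1}_{y_2}$, $x,y\in H$. *)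

From HB Require Import structures.
From mathcomp Require Import all_boot all_order all_algebra all_fingroup.
From mathcomp Require Import fraction.
From mathcomp Require Import mpoly.
From Stdlib Require Import ClassicalEpsilon.

Set Implicit Arguments.
Unset Strict Implicit.
Unset Printing Implicit Defensive.

Import GRing.Theory.
Local Open Scope ring_scope.

Definition ratfun (k : fieldType) (m : nat) := {fraction {mpoly k[m]}}.

Definition kconst (k : fieldType) (m : nat) (c : k) : ratfun k m :=
  tofrac (c%:MP_[m]).

Definition kalg_iso (k : fieldType) (K1 K2 : nzRingType)
    (i1 : k -> K1) (i2 : k -> K2) (A : K1 -> Prop) (B : K2 -> Prop)
    (f : K1 -> K2) : Prop :=
  [/\ (forall x, A x -> B (f x)),
      (forall x y, A x -> A y -> f x = f y -> x = y),
      (forall z, B z -> exists2 x, A x & f x = z),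
      f 1 = 1 &
      forall x y c, A x -> A y ->
        [/\ f (x + y) = f x + f y, f (x * y) = f x * f y &
            f (i1 c * x) = i2 c * f x]].

Definition is_ksubalg (k : fieldType) (K : nzRingType) (i : k -> K)
    (A : K -> Prop) : Prop :=
  [/\ A 1,
      (forall x y, A x -> A y -> A (x + y)),
      (forall x y, A x -> A y -> A (x * y)) &
      (forall c x, A x -> A (i c * x))].

Definition ksubalg_gen (k : fieldType) (K : nzRingType) (i : k -> K)
    (S : K -> Prop) : K -> Prop :=
  fun z => forall A, is_ksubalg i A -> (forall s, S s -> A s) -> A z.

(* Localization T^{-1} k[x_1..x_m] of the polynomial algebra at a
   multiplicative subset T (0 \notin T), realised inside k(x_1..x_m). *)
Definition mult_subset (k : fieldType) (m : nat) (T : {mpoly k[m]} -> Prop) :=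
  [/\ T 1, (forall s t, T s -> T t -> T (s * t)) & ~ T 0].

Definition localization (k : fieldType) (m : nat) (T : {mpoly k[m]} -> Prop)
  : ratfun k m -> Prop :=
  fun z => exists p t, T t /\ z = tofrac p / tofrac t.

Definition purely_transcendental (k : fieldType) (K : nzRingType)
    (i : k -> K) (L : K -> Prop) : Prop :=
  exists (r : nat) (phi : ratfun k r -> K),
    kalg_iso (@kconst k r) i (fun _ => True) L phi.

Section GenericBase.
Variables (k : fieldType) (gT : finGroupType).

(* Frac S(tau_H): S(tau_H) = k[tau_{e_g} | g in G], variables indexed by
   enum_rank g. *)
Definition Ktau := ratfun k #|gT|.

Definition tau (g : gT) : Ktau := tofrac ('X_(enum_rank g)).

(* Defining property of tau^{-1}, on the basis {e_g}:
   Delta(e_g) = sum_h e_{g h^-1} (x) e_h, eps(e_g) = [g == 1]. *)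
Definition is_tauinv (f : gT -> Ktau) : Prop :=
  (forall g : gT, \sum_(h : gT) tau (g * h^-1)%g * f h = (g == 1%g)%:R) /\
  (forall g : gT, \sum_(h : gT) f (g * h^-1)%g * tau h = (g == 1%g)%:R).

(* The (unique) such map: tauinv g := tau^{-1}_{e_g}. *)
Definition tauinv : gT -> Ktau :=
  epsilon (inhabits (fun _ => 0)) is_tauinv.

(* sigma(e_a, e_b) = tau_{(e_a)_1} tau_{(e_b)_1} tau^{-1}_{(e_a)_2 (e_b)_2} *)
Definition sigma_e (a b : gT) : Ktau :=
  \sum_(h : gT) tau (a * h^-1)%g * tau (b * h^-1)%g * tauinv h.

(* sigma^{-1}(e_a, e_b) = tau_{(e_a)_1 (e_b)_1} tau^{-1}_{(e_a)_2} tau^{-1}_{(e_b)_2} *)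
Definition sigmainv_e (a b : gT) : Ktau :=
  \sum_(h : gT) \sum_(l : gT)
     (if (a * h^-1)%g == (b * l^-1)%g then tau (a * h^-1)%g * tauinv h * tauinv l
      else 0).

(* Elements of H = O_k(G) are functions x : G -> k, x = sum_g x(g) e_g;
   sigma, sigma^{-1} extended bilinearly. *)
Definition sigma (x y : {ffun gT -> k}) : Ktau :=
  \sum_(a : gT) \sum_(b : gT) kconst #|gT| (x a) * kconst #|gT| (y b) * sigma_e a b.

Definition sigmainv (x y : {ffun gT -> k}) : Ktau :=
  \sum_(a : gT) \sum_(b : gT) kconst #|gT| (x a) * kconst #|gT| (y b) * sigmainv_e a b.

Definition generic_base_algebra : Ktau -> Prop :=
  ksubalg_gen (@kconst k #|gT|)
    (fun z => exists x y, z = sigma x y \/ z = sigmainv x y).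

(* k(t_g | g in G); t_g is the variable of index enum_rank g. *)
Definition Kt := ratfun k #|gT|.

(* h . t_g = t_{hg}, as a k-algebra endomorphism of k[t_g | g in G]. *)
Definition act_poly (h : gT) (p : {mpoly k[#|gT|]}) : {mpoly k[#|gT|]} :=
  comp_mpoly [tuple 'X_(enum_rank (h * enum_val i)%g) | i < #|gT|] p.

Definition act (h : gT) (f : Kt) : Kt :=
  let r := generic_quotient.repr f in tofrac (act_poly h \n_r) / tofrac (act_poly h \d_r).

Definition invariant_field : Kt -> Prop := fun f => forall h : gT, act h f = f.

End GenericBase.

From Pilot Require Import Defs.
From HB Require Import structures.
From mathcomp Require Import all_boot all_order all_algebra all_fingroup.
From mathcomp Require Import fraction mpoly generic_quotient.
From Stdlib Require Import ClassicalEpsilon.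

Set Implicit Arguments.
Unset Strict Implicit.
Unset Printing Implicit Defensive.

Import GRing.Theory.
Local Open Scope ring_scope.

(* Identify Frac S(tau_H) with k(t_g | g in G) via t_g = tau_{e_g}.  The matrix
   (tau_{g h^-1}) is invertible, which is where tau^-1 comes from; every
   generator sigma, sigma^-1 of B_H is fixed by the right translations
   tau_g |-> tau_{gc}.  Conversely tau_a tau_b = sum_l sigma(e_{al^-1}, e_{bl^-1}) tau_l,
   so every polynomial in the tau_g is a Frac(B_H)-linear combination of the
   tau_g, and the right translates of the tau_g are linearly independent; hence
   the invariants of right translation are exactly Frac(B_H).  Conjugating by
   g |-> g^-1 turns right translation into the action h.t_g = t_{hg}, so
   k(t_g)^G is k-isomorphic to Frac(B_H), which is Frac(T^-1 k[x_1..x_m]) =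
   k(x_1..x_m). *)

Section FractionLift.
Variable R : idomainType.

Lemma fracE (x : {fraction R}) : x = tofrac \n_(repr x) / tofrac \d_(repr x).
Proof.
have d_neq0 : tofrac \d_(repr x) != 0 by rewrite tofrac_eq0 denom_ratioP.
apply: (canRL (mulfK d_neq0)); rewrite -{1}[x]reprK; unlock tofrac.
rewrite -[LHS]FracField.pi_mul; apply/eqmodP; rewrite /= FracField.equivfE.
by rewrite !numden_Ratio ?mulf_neq0 ?oner_neq0 ?denom_ratioP // !mulr1 mulrC.
Qed.

Lemma fracP (x : {fraction R}) : exists p q, q != 0 /\ x = tofrac p / tofrac q.
Proof. by exists \n_(repr x), \d_(repr x); split; [exact: denom_ratioP | exact: fracE]. Qed.

Variables (F : fieldType) (g : R -> F).
Hypotheses (gD : {morph g : x y / x + y}) (gM : {morph g : x y / x * y}).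
Hypotheses (g1 : g 1 = 1) (g_inj : injective g).

Definition frac_lift (x : {fraction R}) : F := g \n_(repr x) / g \d_(repr x).

Lemma inj_morph_neq0 q : q != 0 -> g q != 0.
Proof.
have g0 : g 0 = 0 by apply: (addrI (g 0)); rewrite -gD !addr0.
by apply: contra => /eqP gq0; apply/eqP/g_inj; rewrite gq0 g0.
Qed.

Lemma frac_lift_frac p q : q != 0 -> frac_lift (tofrac p / tofrac q) = g p / g q.
Proof.
move=> q_neq0; rewrite /frac_lift; set x := tofrac p / tofrac q.
have d_neq0 : \d_(repr x) != 0 := denom_ratioP _.
have /eqP : tofrac p / tofrac q = tofrac \n_(repr x) / tofrac \d_(repr x) by exact: fracE.
rewrite eqr_div ?tofrac_eq0 // -!tofracM tofrac_eq => /eqP pd_nq.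
by apply/eqP; rewrite eqr_div ?inj_morph_neq0 // -!gM pd_nq.
Qed.

Lemma frac_lift_tofrac p : frac_lift (tofrac p) = g p.
Proof. by rewrite -[tofrac p]divr1 -tofrac1 frac_lift_frac ?oner_neq0 // g1 divr1. Qed.

Lemma frac_lift1 : frac_lift 1 = 1.
Proof. by rewrite -tofrac1 frac_lift_tofrac. Qed.

Lemma frac_liftD : {morph frac_lift : x y / x + y}.
Proof.
move=> x y; have [a [b [b_neq0 ->]]] := fracP x; have [c [d [d_neq0 ->]]] := fracP y.
rewrite addf_div ?tofrac_eq0 // -!tofracM -tofracD !frac_lift_frac ?mulf_neq0 //.
by rewrite gD !gM addf_div ?inj_morph_neq0.
Qed.

Lemma frac_liftM : {morph frac_lift : x y / x * y}.
Proof.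
move=> x y; have [a [b [b_neq0 ->]]] := fracP x; have [c [d [d_neq0 ->]]] := fracP y.
by rewrite mulf_div -!tofracM !frac_lift_frac ?mulf_neq0 // !gM mulf_div.
Qed.

Lemma frac_lift_inj : injective frac_lift.
Proof.
move=> x y; have [a [b [b_neq0 ->]]] := fracP x; have [c [d [d_neq0 ->]]] := fracP y.
rewrite !frac_lift_frac // => /eqP; rewrite eqr_div ?inj_morph_neq0 // -!gM.
move=> /eqP/g_inj ad_cb.
by apply/eqP; rewrite eqr_div ?tofrac_eq0 // -!tofracM ad_cb.
Qed.

Lemma frac_liftV : {morph frac_lift : x / x^-1}.
Proof.
move=> x; have [a [b [b_neq0 ->]]] := fracP x.
have [-> | a_neq0] := eqVneq a 0.
  have lift0 : frac_lift 0 = 0 by apply: (addrI (frac_lift 0)); rewrite -frac_liftD !addr0.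
  by rewrite tofrac0 mul0r invr0 lift0 invr0.
by rewrite invf_div !frac_lift_frac // invf_div.
Qed.

End FractionLift.

Section FracClosure.
Variables (F : fieldType) (B : F -> Prop).

Definition frac_closure (z : F) : Prop :=
  exists p q, [/\ B p, B q, q != 0 & z = p / q].

Hypotheses (B0 : B 0) (B1 : B 1).
Hypotheses (BD : forall x y, B x -> B y -> B (x + y)).
Hypotheses (BM : forall x y, B x -> B y -> B (x * y)).

Lemma frac_closure_sub z : B z -> frac_closure z.
Proof. by move=> Bz; exists z, 1; rewrite divr1 oner_neq0. Qed.

Lemma frac_closureD x y : frac_closure x -> frac_closure y -> frac_closure (x + y).
Proof.
move=> [p [q [Bp Bq q_neq0 ->]]] [p' [q' [Bp' Bq' q'_neq0 ->]]].
exists (p * q' + p' * q), (q * q'); split; rewrite ?mulf_neq0 ?addf_div //.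
  by apply: BD; apply: BM.
exact: BM.
Qed.

Lemma frac_closureM x y : frac_closure x -> frac_closure y -> frac_closure (x * y).
Proof.
move=> [p [q [Bp Bq q_neq0 ->]]] [p' [q' [Bp' Bq' q'_neq0 ->]]].
by exists (p * p'), (q * q'); split; rewrite ?mulf_neq0 ?mulf_div //; apply: BM.
Qed.

Lemma frac_closureV x : frac_closure x -> frac_closure x^-1.
Proof.
move=> [p [q [Bp Bq q_neq0 ->]]].
have [-> | p_neq0] := eqVneq p 0; first by rewrite mul0r invr0; apply: frac_closure_sub.
by exists q, p; rewrite invf_div.
Qed.

Lemma frac_closure_div x y : frac_closure x -> frac_closure y -> frac_closure (x / y).
Proof. by move=> Fx Fy; apply: frac_closureM => //; apply: frac_closureV. Qed.

Lemma frac_closure_sum (I : Type) (r : seq I) (P : pred I) (G : I -> F) :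
  (forall i, P i -> frac_closure (G i)) -> frac_closure (\sum_(i <- r | P i) G i).
Proof. by move=> FG; apply: big_ind => //; [apply: frac_closure_sub | apply: frac_closureD]. Qed.

End FracClosure.

Section KAlgebras.
Variable k : fieldType.

Lemma ksubalg_gen_ksubalg (K : nzRingType) (i : k -> K) (S : K -> Prop) :
  is_ksubalg i (ksubalg_gen i S).
Proof.
split=> [A [A1 _ _ _] _ // | x y Sx Sy A hA SA | x y Sx Sy A hA SA | c x Sx A hA SA].
- by case: (hA) => _ AD _ _; apply: AD; [apply: Sx | apply: Sy].
- by case: (hA) => _ _ AM _; apply: AM; [apply: Sx | apply: Sy].
- by case: (hA) => _ _ _ AZ; apply: AZ; apply: Sx.
Qed.

Lemma ksubalg_gen_sub (K : nzRingType) (i : k -> K) (S : K -> Prop) s :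
  S s -> ksubalg_gen i S s.
Proof. by move=> Ss A _; apply. Qed.

Lemma kalg_iso_comp (K1 K2 K3 : nzRingType) (i1 : k -> K1) (i2 : k -> K2)
    (i3 : k -> K3) (A1 : K1 -> Prop) (A2 : K2 -> Prop) (A3 : K3 -> Prop)
    (f : K1 -> K2) (g : K2 -> K3) :
  kalg_iso i1 i2 A1 A2 f -> kalg_iso i2 i3 A2 A3 g ->
  kalg_iso i1 i3 A1 A3 (fun x => g (f x)).
Proof.
move=> [fA f_inj f_onto f1 f_morph] [gA g_inj g_onto g1 g_morph]; split.
- by move=> x /fA; apply: gA.
- by move=> x y Ax Ay /(g_inj _ _ (fA x Ax) (fA y Ay)); apply: f_inj.
- move=> z /g_onto [y /f_onto [x Ax <-] <-]; by exists x.
- by rewrite f1 g1.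
move=> x y c Ax Ay; have [-> -> ->] := f_morph x y c Ax Ay.
exact: g_morph (fA x Ax) (fA y Ay).
Qed.

Lemma frac_closure_purely_transcendental (K : fieldType) (i : k -> K)
    (B : K -> Prop) (m : nat) (T : {mpoly k[m]} -> Prop) (f : K -> ratfun k m) :
  is_ksubalg i B -> mult_subset T ->
  kalg_iso i (@kconst k m) B (localization T) f ->
  purely_transcendental i (frac_closure B).
Proof.
move=> [B1 BD BM BZ] [T1 _ T0] [fB f_inj f_onto f1 f_morph].
(* g inverts f on polynomials; its lift to fractions maps k(x) onto Frac B. *)
pose g p := epsilon (inhabits 0) (fun x => B x /\ f x = tofrac p).
have [Bg fgE] : (forall p, B (g p)) /\ (forall p, f (g p) = tofrac p).
  suff gP p : B (g p) /\ f (g p) = tofrac p by split=> p; case: (gP p).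
  apply: (epsilon_spec (inhabits 0) (fun x => B x /\ f x = tofrac p)).
  have [|x Bx <-] := f_onto (tofrac p); last by exists x.
  by exists p, 1; rewrite tofrac1 divr1.
have gD : {morph g : p q / p + q}.
  move=> p q; apply: f_inj; rewrite ?fgE; try by [apply: BD | apply: Bg].
  by have [-> _ _] := f_morph _ _ 0 (Bg p) (Bg q); rewrite !fgE tofracD.
have gM : {morph g : p q / p * q}.
  move=> p q; apply: f_inj; rewrite ?fgE; try by [apply: BM | apply: Bg].
  by have [_ -> _] := f_morph _ _ 0 (Bg p) (Bg q); rewrite !fgE tofracM.
have g1 : g 1 = 1 by apply: f_inj; rewrite ?fgE ?f1 ?tofrac1.
have g_inj : injective g by move=> p q gpq; apply/eqP; rewrite -tofrac_eq -!fgE gpq.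
pose Phi := frac_lift g.
have Phi_f x : B x -> Phi (f x) = x.
  move=> Bx; have [p [t [Tt fxE]]] := fB x Bx.
  have t_neq0 : t != 0 by apply: contraPneq T0 => <-.
  rewrite /Phi fxE frac_lift_frac //.
  apply: (canLR (mulfK (inj_morph_neq0 gD g_inj t_neq0))).
  apply: f_inj; try by [apply: Bg | apply: BM].
  by have [_ -> _] := f_morph _ _ 0 Bx (Bg t); rewrite !fgE fxE divfK ?tofrac_eq0.
have PhiC c : Phi (kconst m c) = i c.
  have Bc : B (i c) by rewrite -[i c]mulr1; apply: BZ.
  have fiC : f (i c) = kconst m c.
    by have [_ _ fZ] := f_morph 1 1 c B1 B1; rewrite -[i c]mulr1 fZ f1 mulr1.
  by rewrite /Phi frac_lift_tofrac //; apply: f_inj; rewrite ?fgE ?fiC.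
exists m, Phi; split=> [x _ | x y _ _ | z | | x y c _ _].
- have [p [q [q_neq0 ->]]] := fracP x; exists (g p), (g q).
  by rewrite /Phi frac_lift_frac ?inj_morph_neq0.
- exact: frac_lift_inj.
- move=> [p [q [Bp Bq _ ->]]]; exists (f p / f q) => //.
  by rewrite /Phi frac_liftM ?frac_liftV // -/Phi !Phi_f.
- exact: frac_lift1.
by rewrite /Phi !frac_liftM ?frac_liftD // -/Phi PhiC.
Qed.

End KAlgebras.

Section Renaming.
Variables (R : idomainType) (I : finType).
Local Notation n := #|I|.
Local Notation X i := (tofrac ('X_(enum_rank i) : {mpoly R[n]})).

Lemma rank_perm_inj (s : {perm I}) :
  injective (fun j : 'I_n => enum_rank (s (enum_val j))).
Proof. by move=> j j' /enum_rank_inj /perm_inj /enum_val_inj. Qed.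

Definition rank_perm (s : {perm I}) : 'S_n := perm (@rank_perm_inj s).

Lemma rank_permM s t : rank_perm (s * t)%g = (rank_perm s * rank_perm t)%g.
Proof. by apply/permP => j; rewrite /rank_perm !permE /= !permE enum_rankK. Qed.

Lemma rank_perm1 : rank_perm 1 = 1%g.
Proof. by apply/permP => j; rewrite permE /= !perm1 enum_valK. Qed.

Lemma msym_rank_perm s (p : {mpoly R[n]}) :
  msym (rank_perm s) p = p \mPo [tuple 'X_(enum_rank (s (enum_val j))) | j < n].
Proof.
rewrite -[msym _ p]comp_mpoly_id msym_mPo; congr comp_mpoly.
by apply: eq_mktuple => j; rewrite tnth_mktuple permE.
Qed.

Definition rename_frac (s : {perm I}) : {fraction {mpoly R[n]}} -> {fraction {mpoly R[n]}} :=
  frac_lift (fun p : {mpoly R[n]} => tofrac (msym (rank_perm s) p)).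

Section RenameMorphism.
Variable s : {perm I}.
Local Notation g := (fun p : {mpoly R[n]} => tofrac (msym (rank_perm s) p)).

Let gD : {morph g : p q / p + q}. Proof. by move=> p q; rewrite rmorphD tofracD. Qed.
Let gM : {morph g : p q / p * q}. Proof. by move=> p q; rewrite rmorphM tofracM. Qed.
Let g1 : g 1 = 1. Proof. by rewrite /= rmorph1 tofrac1. Qed.
Let g_inj : injective g.
Proof. by move=> p q /eqP; rewrite tofrac_eq => /eqP /inj_msym. Qed.

Lemma rename_frac_is_zmod_morphism : zmod_morphism (rename_frac s).
Proof.
move=> x y; apply: (addIr (rename_frac s y)).
by rewrite /rename_frac -frac_liftD // !subrK.
Qed.

Lemma rename_frac_is_monoid_morphism : monoid_morphism (rename_frac s).
Proof. by split; [apply: frac_lift1 | apply: frac_liftM]. Qed.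

Lemma rename_frac_tofrac p : rename_frac s (tofrac p) = tofrac (msym (rank_perm s) p).
Proof. exact: frac_lift_tofrac. Qed.

End RenameMorphism.

HB.instance Definition _ s := GRing.isZmodMorphism.Build _ _ (rename_frac s)
  (rename_frac_is_zmod_morphism s).
HB.instance Definition _ s := GRing.isMonoidMorphism.Build _ _ (rename_frac s)
  (rename_frac_is_monoid_morphism s).

Lemma rename_fracX s i : rename_frac s (X i) = X (s i).
Proof.
by rewrite rename_frac_tofrac msym_rank_perm comp_mpolyXU -tnth_nth tnth_mktuple enum_rankK.
Qed.

Lemma rename_fracC s c : rename_frac s (tofrac c%:MP) = tofrac c%:MP.
Proof. by rewrite rename_frac_tofrac msym_rank_perm comp_mpolyC. Qed.

Lemma rename_frac_div s p q :
  rename_frac s (tofrac p / tofrac q) =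
    tofrac (msym (rank_perm s) p) / tofrac (msym (rank_perm s) q).
Proof. by rewrite fmorph_div /= !rename_frac_tofrac. Qed.

Lemma rename_fracM s t x : rename_frac t (rename_frac s x) = rename_frac (s * t)%g x.
Proof.
have [p [q [_ ->]]] := fracP x.
by rewrite !rename_frac_div rank_permM !msymMm.
Qed.

Lemma rename_frac1 x : rename_frac 1 x = x.
Proof.
have [p [q [_ ->]]] := fracP x.
by rewrite rename_frac_div rank_perm1 !msym1m.
Qed.

End Renaming.

Arguments rename_frac {R I}.

Section Convolution.
Variables (R : nzRingType) (gT : finGroupType).
Implicit Types u v w : gT -> R.

Definition conv u v : gT -> R := fun g => \sum_(h : gT) u (g * h^-1)%g * v h.

Definition delta1 : gT -> R := fun g => (g == 1%g)%:R.

Lemma eq_conv u u' v v' : u =1 u' -> v =1 v' -> conv u v =1 conv u' v'.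
Proof. by move=> eq_u eq_v g; apply: eq_bigr => h _; rewrite eq_u eq_v. Qed.

Lemma convA u v w : conv (conv u v) w =1 conv u (conv v w).
Proof.
move=> g; rewrite /conv; under eq_bigr do rewrite mulr_suml.
under [RHS]eq_bigr do rewrite mulr_sumr.
rewrite [RHS]exchange_big; apply: eq_bigr => h _ /=.
rewrite [RHS](reindex_inj (mulIg h)); apply: eq_bigr => l _ /=.
by rewrite mulgK invMg mulgA mulrA.
Qed.

Lemma sum_mul_delta1 u : \sum_g u g * delta1 g = u 1%g.
Proof.
rewrite (bigD1 1%g) //= big1 => [|g /negbTE g_neq1].
  by rewrite /delta1 eqxx mulr1 addr0.
by rewrite /delta1 g_neq1 mulr0.
Qed.

Lemma conv1r u : conv u delta1 =1 u.
Proof. by move=> g; rewrite /conv sum_mul_delta1 invg1 mulg1. Qed.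

Lemma conv1l u : conv delta1 u =1 u.
Proof.
move=> g; rewrite /conv (bigD1 g) //= big1 => [|h h_neq_g].
  by rewrite /delta1 mulgV eqxx mul1r addr0.
by rewrite /delta1 -eq_mulgV1 eq_sym (negbTE h_neq_g) mul0r.
Qed.

Lemma conv_inv_unique u v w : conv u v =1 delta1 -> conv v w =1 delta1 -> u =1 w.
Proof.
move=> uv1 vw1 g; rewrite -conv1r -[RHS]conv1l.
by rewrite -(eq_conv (frefl u) vw1 g) -convA (eq_conv uv1 (frefl w)).
Qed.

Lemma conv_eq0 u v w : conv u v =1 (fun=> 0) -> conv v w =1 delta1 -> u =1 (fun=> 0).
Proof.
move=> uv0 vw1 g; rewrite -conv1r -(eq_conv (frefl u) vw1 g) -convA.
by rewrite (eq_conv uv0 (frefl w)) /conv big1 // => h _; rewrite mul0r.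
Qed.

End Convolution.

Arguments delta1 {R gT}.

Section GenericBaseAlgebra.
Variables (k : fieldType) (gT : finGroupType).
Local Notation n := #|gT|.
Local Notation K := (Ktau k gT).
Local Notation tau := (@tau k gT).

Definition tau_mx : 'M[K]_n := \matrix_(i, j) tau (enum_val i * (enum_val j)^-1)%g.

Definition colfun (u : gT -> K) : 'cV[K]_n := \col_j u (enum_val j).

Lemma colfunK u g : colfun u (enum_rank g) 0 = u g.
Proof. by rewrite mxE enum_rankK. Qed.

Lemma colfun_conv u : colfun (conv tau u) = tau_mx *m colfun u.
Proof.
apply/matrixP => i j; rewrite !mxE /conv (reindex _ (onW_bij _ (enum_val_bij gT))).
by apply: eq_bigr => l _; rewrite !mxE.
Qed.

(* The group matrix specialises to the identity at t_g = [g == 1]. *)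
Lemma tau_mx_unit : tau_mx \in unitmx.
Proof.
pose P : 'M[{mpoly k[n]}]_n :=
  \matrix_(i, j) 'X_(enum_rank (enum_val i * (enum_val j)^-1)%g).
have -> : tau_mx = map_mx (@tofrac _) P by apply/matrixP => i j; rewrite !mxE.
rewrite unitmxE unitfE det_map_mx tofrac_eq0.
pose v (i : 'I_n) : k := (enum_val i == 1%g)%:R.
apply: contra_neq (@oner_neq0 k) => detP0.
rewrite -(det1 k n) -[RHS](meval0 v) -detP0 -det_map_mx; congr (\det _).
apply/matrixP => i j; rewrite !mxE /= mevalXU /v enum_rankK -eq_mulgV1.
by rewrite (inj_eq enum_val_inj).
Qed.

Lemma conv_tau_inj u v : conv tau u =1 conv tau v -> u =1 v.
Proof.
move=> eq_uv; have : colfun (conv tau u) = colfun (conv tau v).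
  by apply/matrixP => i j; rewrite !mxE eq_uv.
rewrite !colfun_conv => /(congr1 (mulmx (invmx tau_mx))).
by rewrite !mulKmx ?tau_mx_unit // => eq_col g; rewrite -colfunK eq_col colfunK.
Qed.

Lemma tauinv_exists : exists f, @is_tauinv k gT f.
Proof.
pose f g := (invmx tau_mx *m colfun delta1) (enum_rank g) 0.
have tau_f : conv tau f =1 delta1.
  have colf : colfun f = invmx tau_mx *m colfun delta1.
    by apply/matrixP => i j; rewrite ord1 [LHS]mxE /f enum_valK.
  by move=> g; rewrite -colfunK colfun_conv colf mulKVmx ?tau_mx_unit // colfunK.
exists f; split=> //; apply: conv_tau_inj => g.
by rewrite -convA (eq_conv tau_f (frefl tau)) conv1l conv1r.
Qed.

Lemma tauinvR : conv tau (@tauinv k gT) =1 delta1.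
Proof. exact: proj1 (epsilon_spec _ _ tauinv_exists). Qed.

Lemma tauinvL : conv (@tauinv k gT) tau =1 delta1.
Proof. exact: proj2 (epsilon_spec _ _ tauinv_exists). Qed.
Local Notation tauinv := (@tauinv k gT).
Local Notation sigma_e := (@sigma_e k gT).
Local Notation sigmainv_e := (@sigmainv_e k gT).
Local Notation B := (@generic_base_algebra k gT).
Local Notation kc := (@kconst k n).

Lemma generic_base_ksubalg : is_ksubalg kc B.
Proof. exact: ksubalg_gen_ksubalg. Qed.

Let B1 : B 1. Proof. by case: generic_base_ksubalg. Qed.
Let BD x y : B x -> B y -> B (x + y).
Proof. by case: generic_base_ksubalg => _ + _ _; apply. Qed.
Let BM x y : B x -> B y -> B (x * y).
Proof. by case: generic_base_ksubalg => _ _ + _; apply. Qed.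
Let B_kconst c : B (kc c).
Proof. by rewrite -[kc c]mulr1; case: generic_base_ksubalg => _ _ _; apply. Qed.
Let B0 : B 0. Proof. by have := B_kconst 0; rewrite /kconst !rmorph0. Qed.
Let B_sum (G : gT -> K) : (forall h, B (G h)) -> B (\sum_h G h).
Proof. by move=> BG; apply: big_ind. Qed.

Lemma generic_base_sigma_e a b : B (sigma_e a b).
Proof.
pose e c := [ffun x : gT => ((x == c)%:R : k)].
have Bsigma : B (sigma (e a) (e b)) by apply: ksubalg_gen_sub; exists (e a), (e b); left.
suff <- : sigma (e a) (e b) = sigma_e a b by [].
have pick c (F : gT -> K) : \sum_x kc (e c x) * F x = F c.
  under eq_bigr do rewrite ffunE /kconst !rmorph_nat mulr_natl mulrb.
  by rewrite -big_mkcond big_pred1_eq.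
rewrite /sigma; under eq_bigr do under eq_bigr do rewrite -mulrA.
by under eq_bigr do rewrite -mulr_sumr pick; rewrite pick.
Qed.

Definition tau_sum : K := \sum_g tau g.

Lemma sum_tau_shift h : \sum_b tau (b * h^-1)%g = tau_sum.
Proof. by rewrite (reindex_inj (mulIg h)); apply: eq_bigr => b _; rewrite /= mulgK. Qed.

Lemma tau_sum_sigma_e : \sum_b sigma_e 1%g b = tau_sum.
Proof.
rewrite /sigma_e exchange_big /=.
under eq_bigr do rewrite -mulr_suml -mulr_sumr sum_tau_shift mulrAC.
by rewrite -mulr_suml [X in X * _](tauinvR 1%g) /delta1 eqxx mul1r.
Qed.

Lemma generic_base_tau_sum : B tau_sum.
Proof. by rewrite -tau_sum_sigma_e; apply: B_sum => b; apply: generic_base_sigma_e. Qed.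

Lemma tau_sum_neq0 : tau_sum != 0.
Proof.
have : \sum_g conv tau tauinv g = 1.
  rewrite (eq_bigr _ (fun g _ => tauinvR g)).
  by under eq_bigr do rewrite -[delta1 _]mul1r; rewrite sum_mul_delta1.
rewrite /conv exchange_big /=.
under eq_bigr do rewrite -mulr_suml sum_tau_shift.
by rewrite -mulr_sumr; apply: contra_eq_neq => ->; rewrite mul0r eq_sym oner_neq0.
Qed.

(* tau_{x_1} tau_{y_1} = sigma(x_1, y_1) tau_{x_2 y_2} for x = e_a, y = e_b. *)
Lemma tauM a b : tau a * tau b = \sum_l sigma_e (a * l^-1)%g (b * l^-1)%g * tau l.
Proof.
have tauinvL' l : \sum_h tauinv h * tau (h^-1 * l)%g = delta1 l.
  rewrite -(tauinvL l) /conv.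
  rewrite [RHS](reindex_inj (inj_comp (mulIg l) (@invg_inj gT))) /=.
  by apply: eq_bigr => h _; rewrite invMg invgK mulgA mulgV mul1g.
rewrite /sigma_e; under [RHS]eq_bigr do rewrite mulr_suml.
rewrite [RHS]exchange_big /=.
under [RHS]eq_bigr => h _.
  rewrite (reindex_inj (mulgI h^-1%g)) /=.
  under eq_bigr do rewrite invMg invgK !mulgA !mulgK -mulrA.
  over.
rewrite [RHS]exchange_big /=; under [RHS]eq_bigr do rewrite -mulr_sumr tauinvL'.
by rewrite sum_mul_delta1 invg1 !mulg1.
Qed.

Local Notation FB := (frac_closure B).
Let FB_sub := frac_closure_sub B1.
Let FBD := frac_closureD BD BM.
Let FBM := frac_closureM BM.
Let FBV := frac_closureV B0 B1.
Let FBdiv := frac_closure_div B0 B1 BM.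
Let FB_sum := @frac_closure_sum _ _ B0 B1 BD BM _ (index_enum gT) xpredT.

Definition tau_span (z : K) : Prop :=
  exists w : gT -> K, (forall h, FB (w h)) /\ z = \sum_h w h * tau h.

Lemma tau_span0 : tau_span 0.
Proof.
exists (fun=> 0); split=> [h|]; first exact: FB_sub.
by rewrite big1 // => h _; rewrite mul0r.
Qed.

Lemma tau_spanD x y : tau_span x -> tau_span y -> tau_span (x + y).
Proof.
move=> [w [Fw ->]] [w' [Fw' ->]]; exists (fun h => w h + w' h).
split=> [h|]; first exact: FBD (Fw h) (Fw' h).
by rewrite -big_split; apply: eq_bigr => h _; rewrite mulrDl.
Qed.

Lemma tau_spanZ c z : FB c -> tau_span z -> tau_span (c * z).
Proof.
move=> Fc [w [Fw ->]]; exists (fun h => c * w h).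
split=> [h|]; first exact: FBM Fc (Fw h).
by rewrite mulr_sumr; apply: eq_bigr => h _; rewrite mulrA.
Qed.

Lemma tau_span_sum (G : gT -> K) : (forall h, tau_span (G h)) -> tau_span (\sum_h G h).
Proof. by move=> SG; apply: big_ind => //; [apply: tau_span0 | apply: tau_spanD]. Qed.

Lemma tau_span1 : tau_span 1.
Proof.
exists (fun=> tau_sum^-1); split=> [h|].
  by apply: FBV; apply: FB_sub; apply: generic_base_tau_sum.
by rewrite -mulr_sumr mulVf ?tau_sum_neq0.
Qed.

Lemma tau_span_tau g : tau_span (tau g).
Proof.
exists (fun h => (h == g)%:R); split=> [h|]; first by case: eqP => _; apply: FB_sub.
rewrite (bigD1 g) //= eqxx mul1r big1 ?addr0 // => h /negbTE ->.
by rewrite mul0r.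
Qed.

Lemma tau_span_tauM g z : tau_span z -> tau_span (tau g * z).
Proof.
move=> [w [Fw ->]]; rewrite mulr_sumr.
under eq_bigr do rewrite mulrCA tauM mulr_sumr.
rewrite exchange_big; apply: tau_span_sum => l /=.
under eq_bigr do rewrite mulrA; rewrite -mulr_suml.
apply: tau_spanZ; last exact: tau_span_tau.
apply: FB_sum => h _; apply: FBM (Fw h) _; apply: FB_sub; exact: generic_base_sigma_e.
Qed.

Lemma tau_spanM x y : tau_span x -> tau_span y -> tau_span (x * y).
Proof.
move=> [w [Fw ->]] Sy; rewrite mulr_suml; apply: tau_span_sum => h.
by rewrite -mulrA; apply: tau_spanZ (Fw h) _; apply: tau_span_tauM.
Qed.

Lemma tau_span_tofrac p : tau_span (tofrac p).
Proof.
elim/mpolyind: p => [|c m p _ _ IHp]; first by rewrite tofrac0; apply: tau_span0.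
rewrite tofracD -mul_mpolyC tofracM; apply: tau_spanD => //.
apply: tau_spanZ; first exact: FB_sub (B_kconst c).
rewrite mpolyXE_id rmorph_prod; apply: big_ind => [|x y|i _].
- exact: tau_span1.
- exact: tau_spanM.
rewrite rmorphXn; elim: (m i) => [|e IHe]; first by rewrite expr0; apply: tau_span1.
by rewrite exprS; apply: tau_spanM => //; rewrite -[i]enum_valK; apply: tau_span_tau.
Qed.

Definition rmul_perm (c : gT) : {perm gT} := perm (mulIg c).

Local Notation rho c := (@rename_frac k gT (rmul_perm c)).

Lemma rho_tau c g : rho c (tau g) = tau (g * c)%g.
Proof. by rewrite rename_fracX permE. Qed.

Lemma rho_kconst c a : rho c (kc a) = kc a.
Proof. exact: rename_fracC. Qed.

Lemma rho_tauinv c h : rho c (tauinv h) = tauinv (c^-1 * h)%g.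
Proof.
pose v g := rho c (tau g).
have uv1 : conv (fun h => rho c (tauinv h)) v =1 delta1.
  move=> g; have := congr1 (rho c) (tauinvL g).
  rewrite /conv rmorph_sum /delta1 rmorph_nat => <-.
  by apply: eq_bigr => h' _; rewrite rmorphM.
have vw1 : conv v (fun h => tauinv (c^-1 * h)%g) =1 delta1.
  move=> g; rewrite -(tauinvR g) /conv [RHS](reindex_inj (mulgI c^-1%g)) /=.
  by apply: eq_bigr => l _; rewrite /v rho_tau invMg invgK mulgA.
exact: conv_inv_unique uv1 vw1 h.
Qed.

Lemma rho_sigma_e c a b : rho c (sigma_e a b) = sigma_e a b.
Proof.
rewrite /sigma_e rmorph_sum [LHS](reindex_inj (mulgI c)); apply: eq_bigr => h _ /=.
by rewrite !rmorphM /= !rho_tau rho_tauinv mulKg invMg !mulgA !mulgKV.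
Qed.

Lemma rho_sigmainv_e c a b : rho c (sigmainv_e a b) = sigmainv_e a b.
Proof.
rewrite /sigmainv_e rmorph_sum [LHS](reindex_inj (mulgI c)); apply: eq_bigr => h _ /=.
rewrite rmorph_sum [LHS](reindex_inj (mulgI c)); apply: eq_bigr => l _ /=.
rewrite !invMg !mulgA (inj_eq (mulIg _)); case: ifP => _; last exact: rmorph0.
by rewrite !rmorphM /= rho_tau !rho_tauinv !mulKg mulgKV.
Qed.

Lemma rho_generic_base c z : B z -> rho c z = z.
Proof.
move=> Bz; apply: (Bz (fun z => rho c z = z)) => [|_ [x [y [->|->]]]].
  split=> [|x y rx ry|x y rx ry|a x rx];
    by rewrite ?rmorph1 ?rmorphD ?rmorphM /= ?rho_kconst ?rx ?ry.
all: rewrite rmorph_sum; apply: eq_bigr => a _; rewrite rmorph_sum; apply: eq_bigr => b _.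
all: by rewrite !rmorphM /= !rho_kconst ?rho_sigma_e ?rho_sigmainv_e.
Qed.

Lemma rho_frac_closure c z : FB z -> rho c z = z.
Proof. by move=> [p [q [Bp Bq _ ->]]]; rewrite fmorph_div /= !rho_generic_base. Qed.

Lemma tau_translates_free (v : gT -> K) :
  (forall c, \sum_h v h * tau (h * c)%g = 0) -> forall h, v h = 0.
Proof.
move=> v0; have u0 : conv (fun l => v l^-1%g) tau =1 (fun=> 0).
  move=> g; rewrite -(v0 g) /conv (reindex_inj (mulIg g)) /=.
  by apply: eq_bigr => h _; rewrite invMg invgK mulgK.
by move=> h; rewrite -[h]invgK; apply: conv_eq0 u0 (@tauinvR) h^-1%g.
Qed.

Lemma rho_fixed_frac_closure z : (forall c, rho c z = z) -> FB z.
Proof.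
move=> z_fixed; have [p [q [q_neq0 zE]]] := fracP z.
have [a [Fa pE]] := tau_span_tofrac p.
have [b [Fb qE]] := tau_span_tofrac q.
have rho_span (w : gT -> K) c : (forall h, FB (w h)) ->
    rho c (\sum_h w h * tau h) = \sum_h w h * tau (h * c)%g.
  move=> Fw; rewrite rmorph_sum; apply: eq_bigr => h _.
  by rewrite rmorphM /= rho_tau rho_frac_closure.
have pzq : tofrac p = z * tofrac q by rewrite zE divfK ?tofrac_eq0.
have abz h : z * b h = a h.
  apply/eqP; rewrite eq_sym -subr_eq0; apply/eqP; move: h.
  apply: tau_translates_free => c.
  have := congr1 (rho c) pzq; rewrite rmorphM /= z_fixed pE qE !rho_span // => rho_pzq.
  by under eq_bigr do rewrite mulrBl -mulrA; rewrite sumrB -mulr_sumr -rho_pzq subrr.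
have [h bh_neq0] : exists h, b h != 0.
  apply/existsP; apply: contraTT q_neq0 => /existsPn b0.
  rewrite negbK -tofrac_eq0 qE big1 // => h _.
  by move/negPn/eqP: (b0 h) ->; rewrite mul0r.
by rewrite (canRL (mulfK bh_neq0) (abz h)); apply: FBdiv (Fa h) (Fb h).
Qed.

Definition inv_perm : {perm gT} := perm (@invg_inj gT).

Local Notation psi := (@rename_frac k gT inv_perm).
Local Notation act := (@Defs.act k gT).

Lemma act_rename h x : act h x = rename_frac (perm (mulgI h)) x.
Proof.
rewrite /Defs.act /rename_frac /frac_lift /=; congr (tofrac _ / tofrac _).
all: by rewrite msym_rank_perm; congr comp_mpoly; apply: eq_mktuple => j; rewrite permE.
Qed.

Lemma psiK : involutive psi.
Proof.
move=> x; rewrite rename_fracM (_ : inv_perm * inv_perm = 1)%g ?rename_frac1 //.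
by apply/permP => g; rewrite permM !permE /= invgK.
Qed.

Lemma act_psi c x : act c (psi x) = psi (rho c^-1 x).
Proof.
rewrite act_rename !rename_fracM; congr rename_frac.
by apply/permP => g; rewrite !permM !permE /= invMg invgK.
Qed.

Lemma kalg_iso_invariant_field : kalg_iso kc kc FB (@invariant_field k gT) psi.
Proof.
split=> [z Fz c | x y _ _ | z z_inv | | x y a _ _].
- by rewrite act_psi rho_frac_closure.
- exact: fmorph_inj.
- exists (psi z); last exact: psiK.
  apply: rho_fixed_frac_closure => c.
  have := act_psi c^-1 (psi z); rewrite invgK psiK z_inv => zE.
  by rewrite {2}zE psiK.
- exact: rmorph1.
by rewrite rmorphD !rmorphM /= rename_fracC.
Qed.

End GenericBaseAlgebra.

Theorem proposition4p2 (k : fieldType) (gT : finGroupType) :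
  (exists (m : nat) (T : {mpoly k[m]} -> Prop) (f : Ktau k gT -> ratfun k m),
      mult_subset T /\
      kalg_iso (@kconst k #|gT|) (@kconst k m)
        (@generic_base_algebra k gT) (localization T) f) ->
  purely_transcendental (@kconst k #|gT|) (@invariant_field k gT).
Proof.
move=> [m [T [f [T_mult f_iso]]]].
have [r [Phi Phi_iso]] :=
  frac_closure_purely_transcendental (generic_base_ksubalg k gT) T_mult f_iso.
exists r, (fun x => rename_frac (inv_perm gT) (Phi x)).
exact: kalg_iso_comp Phi_iso (kalg_iso_invariant_field k gT).
Qed.
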